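(* Let $n>1$. The set $\{N\in\mathcal{G}_n:\mathbb{F}_n/N\text{ is torsion-free}\}$ is $\mathbf{\Pi}^0_1$-complete.
   Context: $\mathbb{F}_n$ is the free group on $\gamma_1,\dots,\gamma_n$. $\mathcal{G}_n$ is the set of normal subgroups $N\trianglelefteq\mathbb{F}_n$, viewed as a subset of $\{0,1\}^{\mathbb{F}_n}$ with the subspace topology of the product of discrete topologies (a compact zero-dimensional Polish space). $\mathbf{\Pi}^0_1$ = closed sets. $A\subseteq X$ is $\mathbf{\Pi}^0_1$-complete if it is closed and for every zero-dimensional Polish space $Y$ and every closed $B\subseteq Y$ there is a continuous $f:Y\to X$ with $f^{-1}[A]=B$. *)

From Stdlib Require Import Reals List Bool Arith.
Import ListNotations.
Open Scope R_scope.

(** * The free group F_n on generators gamma_0, ..., gamma_(n-1)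
    Elements are freely reduced words; a letter (i, b) is gamma_i if b = true
    and gamma_i^{-1} if b = false. *)
Definition letter := (nat * bool)%type.
Definition inv_letter (a : letter) : letter := (fst a, negb (snd a)).
Definition letter_eqb (a b : letter) : bool :=
  Nat.eqb (fst a) (fst b) && Bool.eqb (snd a) (snd b).

Fixpoint reducedb (w : list letter) : bool :=
  match w with
  | a :: ((b :: _) as w') => negb (letter_eqb b (inv_letter a)) && reducedb w'
  | _ => true
  end.

Definition word_okb (n : nat) (w : list letter) : bool :=
  forallb (fun a => Nat.ltb (fst a) n) w && reducedb w.

(** the free group F_n as a type (boolean proof component, so proof irrelevant) *)
Definition FG (n : nat) : Type := { w : list letter | word_okb n w = true }.

Definition push (a : letter) (w : list letter) : list letter :=
  match w with
  | b :: w' => if letter_eqb b (inv_letter a) then w' else a :: w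
  | [] => [a]
  end.
Definition wmul (u v : list letter) : list letter := fold_right push v u.
Definition winv (u : list letter) : list letter := rev (map inv_letter u).
Fixpoint wpow (u : list letter) (k : nat) : list letter :=
  match k with O => [] | S k' => wmul u (wpow u k') end.

Definition X (n : nat) : Type := FG n -> bool.

Definition memw {n : nat} (N : X n) (w : list letter) : Prop :=
  exists h : FG n, proj1_sig h = w /\ N h = true.

Definition is_normal_subgroup {n : nat} (N : X n) : Prop :=
  memw N [] /\
  (forall g h : FG n, N g = true -> N h = true -> memw N (wmul (proj1_sig g) (proj1_sig h))) /\
  (forall g : FG n, N g = true -> memw N (winv (proj1_sig g))) /\
  (forall g h : FG n, N h = true ->
     memw N (wmul (winv (proj1_sig g)) (wmul (proj1_sig h) (proj1_sig g)))).

Definition quotient_torsion_free {n : nat} (N : X n) : Prop :=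
  forall (g : FG n) (k : nat), (1 <= k)%nat -> memw N (wpow (proj1_sig g) k) -> N g = true.

Definition prod_open {n : nat} (U : X n -> Prop) : Prop :=
  forall x, U x -> exists F : list (FG n),
    forall y, (forall c, In c F -> y c = x c) -> U y.

Definition closed_in_Gn {n : nat} (A : X n -> Prop) : Prop :=
  (forall x, A x -> is_normal_subgroup x) /\
  exists U, prod_open U /\ (forall x, is_normal_subgroup x -> (~ A x <-> U x)).

Record ZDPolish : Type := {
  carrier :> Type;
  dist : carrier -> carrier -> R;
  dist_nonneg : forall x y, 0 <= dist x y;
  dist_eq0 : forall x y, dist x y = 0 <-> x = y;
  dist_sym : forall x y, dist x y = dist y x;
  dist_tri : forall x y z, dist x z <= dist x y + dist y z;
  complete : forall u : nat -> carrier,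
    (forall eps, 0 < eps -> exists N, forall m k, (N <= m)%nat -> (N <= k)%nat ->
        dist (u m) (u k) < eps) ->
    exists l, forall eps, 0 < eps -> exists N, forall m, (N <= m)%nat -> dist (u m) l < eps;
  separable : exists s : nat -> option carrier,
    forall x eps, 0 < eps -> exists k y, s k = Some y /\ dist x y < eps;
  zero_dim : forall U : carrier -> Prop,
    (forall x, U x -> exists eps, 0 < eps /\ forall y, dist x y < eps -> U y) ->
    forall x, U x -> exists V : carrier -> Prop,
      (forall z, V z -> exists eps, 0 < eps /\ forall y, dist z y < eps -> V y) /\
      (forall z, ~ V z -> exists eps, 0 < eps /\ forall y, dist z y < eps -> ~ V y) /\
      V x /\ (forall y, V y -> U y)
}.

Definition mopen {Y : ZDPolish} (U : Y -> Prop) : Prop :=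
  forall x, U x -> exists eps, 0 < eps /\ forall y, dist Y x y < eps -> U y.

Definition mclosed {Y : ZDPolish} (B : Y -> Prop) : Prop := mopen (fun y => ~ B y).

Definition continuous_to_Gn {n : nat} {Y : ZDPolish} (f : Y -> X n) : Prop :=
  (forall y, is_normal_subgroup (f y)) /\
  forall U : X n -> Prop, prod_open U ->
    mopen (fun y => U (f y) /\ is_normal_subgroup (f y)).

Definition Pi01_complete_in_Gn {n : nat} (A : X n -> Prop) : Prop :=
  closed_in_Gn A /\
  forall (Y : ZDPolish) (B : Y -> Prop), mclosed B ->
    exists f : Y -> X n, continuous_to_Gn f /\ forall y, A (f y) <-> B y.

(** The exponent sum of [gamma_0] is a homomorphism [F_n -> Z], so every
    subgroup [M] of [Z] pulls back to a normal subgroup [N] with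
    [F_n / N ~= Z / M]; when [1 notin M] this is torsion-free iff [M = 0].
    Torsion-freeness is closed because its failure is witnessed by two
    coordinates ([g^k in N], [g notin N]).  For hardness, write the open
    complement of a closed [B] as a countable union of clopen sets [C_j]
    (zero-dimensionality plus separability) and send [y] to the pullback of
    [M_y = {0} \/ U_{j | y in C_j} 2^(j+1) Z], a union of a chain of subgroups.
    Whether [z <> 0] lies in [M_y] only depends on the [C_j] with [j < |z|],
    so each coordinate of the reduction is locally constant. *)
From Pilot Require Import Defs.
From Stdlib Require Import Reals List Bool Arith.
From Stdlib Require Import ZArith Lia Lra Classical ClassicalEpsilon Cantor.
Import ListNotations.

Lemma letter_eqb_true (a b : letter) : letter_eqb a b = true <-> a = b.
Proof.
  destruct a as [i x], b as [j y]; unfold letter_eqb; simpl.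
  rewrite andb_true_iff, Nat.eqb_eq, eqb_true_iff.
  split; [intros [-> ->]; reflexivity | intros H; inversion H; auto].
Qed.

Lemma inv_letter_involutive (a : letter) : inv_letter (inv_letter a) = a.
Proof. destruct a as [i b]; unfold inv_letter; simpl; rewrite negb_involutive; reflexivity. Qed.

Lemma word_okb_spec (n : nat) (w : list letter) : word_okb n w = true <->
  (forall a, In a w -> (fst a < n)%nat) /\ reducedb w = true.
Proof.
  unfold word_okb; rewrite andb_true_iff, forallb_forall.
  split; intros [H1 H2]; split; auto; intros a Ha; apply Nat.ltb_lt; auto.
Qed.

Lemma reducedb_cons (a : letter) (w : list letter) : reducedb (a :: w) = true -> reducedb w = true.
Proof. destruct w; simpl; [auto | rewrite andb_true_iff; tauto]. Qed.

Lemma reducedb_spec (w : list letter) : reducedb w = true <->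
  (forall w1 a b w2, w = w1 ++ a :: b :: w2 -> b <> inv_letter a).
Proof.
  induction w as [|x w IH].
  - split; auto. intros _ w1 a b w2 E; destruct w1; discriminate.
  - split.
    + intros H w1 a b w2 E.
      destruct w1 as [|y w1]; simpl in E; injection E as -> E.
      * subst w; simpl in H; apply andb_true_iff in H as [H _].
        rewrite negb_true_iff in H; intros Hb; apply letter_eqb_true in Hb; congruence.
      * exact (proj1 IH (reducedb_cons _ _ H) w1 a b w2 E).
    + intros H; destruct w as [|b w]; [reflexivity|].
      change (negb (letter_eqb b (inv_letter x)) && reducedb (b :: w) = true).
      apply andb_true_iff; split.
      * apply negb_true_iff, not_true_iff_false; intros Hb.
        apply letter_eqb_true in Hb; exact (H [] x b w eq_refl Hb).
      * apply IH; intros w1 a c w2 E; apply (H (x :: w1) a c w2); rewrite E; reflexivity.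
Qed.

Lemma word_ok_push (n : nat) (a : letter) (w : list letter) :
  (fst a < n)%nat -> word_okb n w = true -> word_okb n (push a w) = true.
Proof.
  intros Ha Hw; apply word_okb_spec in Hw as [Hn Hr]; apply word_okb_spec.
  destruct w as [|b w]; simpl.
  - split; [intros x [<-|[]]; exact Ha | reflexivity].
  - destruct (letter_eqb b (inv_letter a)) eqn:E.
    + split; [intros x Hx; apply Hn; simpl; auto | eapply reducedb_cons; eauto].
    + split; [intros x [<-|Hx]; auto|].
      simpl in Hr |- *; rewrite E; exact Hr.
Qed.

Lemma word_ok_wmul (n : nat) (u v : list letter) :
  word_okb n u = true -> word_okb n v = true -> word_okb n (wmul u v) = true.
Proof.
  intros Hu Hv; induction u as [|a u IH]; [exact Hv|].
  apply word_okb_spec in Hu as [Hn Hr].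
  apply word_ok_push; [apply Hn; simpl; auto|].
  apply IH, word_okb_spec; split; [intros x Hx; apply Hn; simpl; auto | eapply reducedb_cons; eauto].
Qed.

Lemma word_ok_winv (n : nat) (u : list letter) : word_okb n u = true -> word_okb n (winv u) = true.
Proof.
  intros Hu; apply word_okb_spec in Hu as [Hn Hr]; apply word_okb_spec; unfold winv; split.
  - intros a Ha; apply in_rev, in_map_iff in Ha as [x [<- Hx]]; exact (Hn x Hx).
  - apply reducedb_spec; intros w1 a b w2 E.
    assert (Eu : u = map inv_letter (rev w2) ++ inv_letter b :: inv_letter a :: map inv_letter (rev w1)).
    { rewrite <- (map_id u), <- (map_ext _ _ inv_letter_involutive u), <- map_map.
      rewrite <- (rev_involutive (map inv_letter u)), E, rev_app_distr; simpl.
      rewrite <- !app_assoc, !map_app; reflexivity. }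
    intros Hb; apply (proj1 (reducedb_spec u) Hr _ _ _ _ Eu).
    rewrite Hb, !inv_letter_involutive; reflexivity.
Qed.

Lemma word_ok_wpow (n : nat) (u : list letter) (k : nat) :
  word_okb n u = true -> word_okb n (wpow u k) = true.
Proof. intros Hu; induction k as [|k IH]; [reflexivity | apply word_ok_wmul; auto]. Qed.

Definition letter_exp (i : nat) (a : letter) : Z :=
  if Nat.eqb (fst a) i then (if snd a then 1 else -1)%Z else 0%Z.

Fixpoint exp_sum (i : nat) (w : list letter) : Z :=
  match w with [] => 0%Z | a :: w' => (letter_exp i a + exp_sum i w')%Z end.

Lemma letter_exp_inv (i : nat) (a : letter) : letter_exp i (inv_letter a) = (- letter_exp i a)%Z.
Proof. destruct a as [j b]; unfold letter_exp, inv_letter; simpl; destruct (j =? i)%nat, b; reflexivity. Qed.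

Lemma exp_sum_push (i : nat) (a : letter) (w : list letter) :
  exp_sum i (push a w) = (letter_exp i a + exp_sum i w)%Z.
Proof.
  destruct w as [|b w]; simpl; [reflexivity|].
  destruct (letter_eqb b (inv_letter a)) eqn:E; simpl; [|reflexivity].
  apply letter_eqb_true in E; subst b; rewrite letter_exp_inv; lia.
Qed.

Lemma exp_sum_wmul (i : nat) (u v : list letter) :
  exp_sum i (wmul u v) = (exp_sum i u + exp_sum i v)%Z.
Proof.
  induction u as [|a u IH]; [reflexivity|].
  unfold wmul in *; simpl; rewrite exp_sum_push, IH; lia.
Qed.

Lemma exp_sum_app (i : nat) (u v : list letter) : exp_sum i (u ++ v) = (exp_sum i u + exp_sum i v)%Z.
Proof. induction u as [|a u IH]; simpl; [reflexivity | rewrite IH; lia]. Qed.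

Lemma exp_sum_winv (i : nat) (u : list letter) : exp_sum i (winv u) = (- exp_sum i u)%Z.
Proof.
  unfold winv; induction u as [|a u IH]; simpl; [reflexivity|].
  rewrite exp_sum_app, IH; simpl; rewrite letter_exp_inv; lia.
Qed.

Lemma exp_sum_wpow (i : nat) (u : list letter) (k : nat) :
  exp_sum i (wpow u k) = (Z.of_nat k * exp_sum i u)%Z.
Proof.
  induction k as [|k IH]; [reflexivity|].
  change (wpow u (S k)) with (wmul u (wpow u k)); rewrite exp_sum_wmul, IH, Nat2Z.inj_succ; lia.
Qed.

Definition of_pred {n : nat} (Q : list letter -> Prop) : X n :=
  fun h => if excluded_middle_informative (Q (proj1_sig h)) then true else false.

Lemma of_pred_true {n : nat} (Q : list letter -> Prop) (h : FG n) :
  of_pred Q h = true <-> Q (proj1_sig h).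
Proof. unfold of_pred; destruct excluded_middle_informative; split; auto; congruence. Qed.

Lemma memw_of_pred {n : nat} (Q : list letter -> Prop) (w : list letter) :
  word_okb n w = true -> (memw (of_pred (n := n) Q) w <-> Q w).
Proof.
  intros Hw; split.
  - intros [h [<- Hh]]; apply of_pred_true in Hh; exact Hh.
  - intros H; exists (exist _ w Hw); split; [reflexivity | apply of_pred_true; exact H].
Qed.

Definition exp_pullback (n i : nat) (M : Z -> Prop) : X n :=
  of_pred (fun w => M (exp_sum i w)).

Section Pullback.
Variables (n i : nat) (M : Z -> Prop).
Hypotheses (M0 : M 0%Z) (MD : forall a b, M a -> M b -> M (a + b)%Z) (MN : forall a, M a -> M (- a)%Z).

Lemma exp_pullback_normal : is_normal_subgroup (exp_pullback n i M).
Proof.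
  unfold exp_pullback; split; [|split; [|split]].
  - apply memw_of_pred; [reflexivity | exact M0].
  - intros g h Hg Hh; apply of_pred_true in Hg, Hh.
    apply memw_of_pred; [apply word_ok_wmul; apply proj2_sig|].
    rewrite exp_sum_wmul; auto.
  - intros g Hg; apply of_pred_true in Hg.
    apply memw_of_pred; [apply word_ok_winv, proj2_sig|].
    rewrite exp_sum_winv; auto.
  - intros g h Hh; apply of_pred_true in Hh.
    apply memw_of_pred; [apply word_ok_wmul; [apply word_ok_winv | apply word_ok_wmul]; apply proj2_sig|].
    rewrite !exp_sum_wmul, exp_sum_winv.
    replace (- exp_sum i (proj1_sig g) + (exp_sum i (proj1_sig h) + exp_sum i (proj1_sig g)))%Z
      with (exp_sum i (proj1_sig h)) by lia.
    exact Hh.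
Qed.

Lemma exp_pullback_torsion_free :
  (forall z, M z -> z = 0%Z) -> quotient_torsion_free (exp_pullback n i M).
Proof.
  intros Mtriv g k Hk [h [Eh Hh]]; apply of_pred_true in Hh.
  rewrite Eh, exp_sum_wpow in Hh; apply Mtriv, Z.mul_eq_0 in Hh as [Hh|Hh]; [lia|].
  apply of_pred_true; rewrite Hh; exact M0.
Qed.

Lemma exp_pullback_torsion (m : nat) : (i < n)%nat -> (1 <= m)%nat ->
  M (Z.of_nat m) -> ~ M 1%Z -> ~ quotient_torsion_free (exp_pullback n i M).
Proof.
  intros Hi Hm HMm HM1 Htf.
  assert (Hg : word_okb n [(i, true)] = true).
  { apply word_okb_spec; split; [intros a [<-|[]]; exact Hi | reflexivity]. }
  assert (Hexp : exp_sum i [(i, true)] = 1%Z) by (simpl; unfold letter_exp; rewrite Nat.eqb_refl; reflexivity).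
  apply HM1; rewrite <- Hexp.
  apply (of_pred_true (fun w => M (exp_sum i w)) (exist _ _ Hg)); fold (exp_pullback n i M).
  apply (Htf (exist _ _ Hg) m Hm), memw_of_pred; [apply word_ok_wpow; exact Hg|].
  simpl proj1_sig; rewrite exp_sum_wpow, Hexp, Z.mul_1_r; exact HMm.
Qed.

End Pullback.

Definition dyadic (j : nat) : Z := (2 ^ Z.of_nat (S j))%Z.

Lemma dyadic_divide (i j : nat) : (i <= j)%nat -> (dyadic i | dyadic j)%Z.
Proof.
  intros H; exists (2 ^ Z.of_nat (j - i))%Z; unfold dyadic.
  rewrite <- Z.pow_add_r by lia; f_equal; lia.
Qed.

Lemma dyadic_gt (j : nat) : (Z.of_nat j + 1 < dyadic j)%Z.
Proof.
  unfold dyadic; rewrite Nat2Z.inj_succ, Z.pow_succ_r by lia.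
  pose proof (Z.pow_gt_lin_r 2 (Z.of_nat j)); lia.
Qed.

Definition dyadic_union {T : Type} (C : nat -> T -> Prop) (y : T) (z : Z) : Prop :=
  z = 0%Z \/ exists j, C j y /\ (dyadic j | z)%Z.

Section DyadicUnion.
Variables (T : Type) (C : nat -> T -> Prop) (y : T).

Lemma dyadic_union_add (a b : Z) :
  dyadic_union C y a -> dyadic_union C y b -> dyadic_union C y (a + b).
Proof.
  intros [->|[j1 [H1 D1]]] [->|[j2 [H2 D2]]]; [left; reflexivity | right; eauto | |].
  - right; exists j1; rewrite Z.add_0_r; auto.
  - right; destruct (le_ge_dec j1 j2) as [L|L]; [exists j1 | exists j2]; split; auto.
    + apply Z.divide_add_r; [exact D1 | exact (Z.divide_trans _ _ _ (dyadic_divide _ _ L) D2)].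
    + apply Z.divide_add_r; [exact (Z.divide_trans _ _ _ (dyadic_divide _ _ L) D1) | exact D2].
Qed.

Lemma dyadic_union_opp (a : Z) : dyadic_union C y a -> dyadic_union C y (- a).
Proof.
  intros [->|[j [H D]]]; [left; reflexivity | right; exists j; split; auto].
  apply Z.divide_opp_r; exact D.
Qed.

Lemma dyadic_union_one : ~ dyadic_union C y 1.
Proof.
  intros [H|[j [_ D]]]; [discriminate|].
  apply Z.divide_pos_le in D; [|lia]; pose proof (dyadic_gt j); lia.
Qed.

Lemma dyadic_union_trivial : (forall j, ~ C j y) -> forall z, dyadic_union C y z -> z = 0%Z.
Proof. intros HC z [Hz|[j [Cj _]]]; [exact Hz | destruct (HC j Cj)]. Qed.

(** A divisor [dyadic j] of [z <> 0] has [j < |z|]. *)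
Lemma dyadic_union_bounded (z : Z) : z <> 0%Z -> (dyadic_union C y z <->
  exists j, In j (seq 0 (Z.to_nat (Z.abs z))) /\ C j y /\ (dyadic j | z)%Z).
Proof.
  intros Hz; split.
  - intros [H|[j [H D]]]; [contradiction|]; exists j; repeat split; auto.
    apply in_seq; assert (D' : (dyadic j | Z.abs z)%Z) by (apply Z.divide_abs_r; auto).
    apply Z.divide_pos_le in D'; [|lia]; pose proof (dyadic_gt j); lia.
  - intros [j [_ [H D]]]; right; exists j; auto.
Qed.

End DyadicUnion.

Section Local.
Variable Y : ZDPolish.

Definition near (x : Y) (P : Y -> Prop) : Prop :=
  exists eps, 0 < eps /\ forall y, Defs.dist Y x y < eps -> P y.

Definition locally_constant (P : Y -> Prop) : Prop :=
  forall x, near x (fun y => P y <-> P x).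

Definition clopen (V : Y -> Prop) : Prop := mopen V /\ mopen (fun y => ~ V y).

Lemma near_forall_in {A : Type} (x : Y) (P : A -> Y -> Prop) (F : list A) :
  (forall c, In c F -> near x (P c)) -> near x (fun y => forall c, In c F -> P c y).
Proof.
  induction F as [|c F IH]; intros HF.
  - exists 1; split; [lra | intros y _ c []].
  - destruct (HF c (or_introl eq_refl)) as [e1 [e1p H1]].
    destruct IH as [e2 [e2p H2]]; [intros c' Hc'; apply HF; right; exact Hc'|].
    exists (Rmin e1 e2); split; [apply Rmin_pos; auto|].
    intros y d c' [<-|Hc'].
    + apply H1; eapply Rlt_le_trans; [exact d | apply Rmin_l].
    + apply H2; [eapply Rlt_le_trans; [exact d | apply Rmin_r] | exact Hc'].
Qed.

Lemma clopen_locally_constant (V : Y -> Prop) : clopen V -> locally_constant V.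
Proof.
  intros [HV HnV] x; destruct (classic (V x)) as [Vx|nVx].
  - destruct (HV x Vx) as [e [ep He]]; exists e; split; auto; intros y d; split; auto.
  - destruct (HnV x nVx) as [e [ep He]]; exists e; split; auto.
    intros y d; split; [intros Vy; destruct (He y d Vy) | intros Vx; destruct (nVx Vx)].
Qed.

(** [C (k, m)] is a clopen subset of [U] containing the ball of radius
    [1/(m+1)] around the [k]-th point of the dense sequence, whenever such a
    clopen set exists; [admissible] makes the choice total (else [C (k, m)]
    may be empty).  Zero-dimensionality shows every point of [U] is covered. *)
Lemma open_clopen_cover (U : Y -> Prop) : mopen U ->
  exists C : nat -> Y -> Prop, (forall j, clopen (C j)) /\
    (forall j y, C j y -> U y) /\ (forall y, U y -> exists j, C j y).
Proof.
  intros HU; destruct (separable Y) as [s Hs].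
  set (inside V := clopen V /\ forall y, V y -> U y).
  set (good k m V := inside V /\ exists z, s k = Some z /\
                       forall y, Defs.dist Y z y < / INR (S m) -> V y).
  set (admissible k m V := inside V /\ ((exists W, good k m W) -> good k m V)).
  assert (Hadm : forall k m, exists V, admissible k m V).
  { intros k m; destruct (classic (exists W, good k m W)) as [[W HW]|nW].
    - exists W; split; [apply HW | auto].
    - exists (fun _ => False); repeat split; try contradiction.
      + intros x [].
      + intros x _; exists 1; split; [lra | auto]. }
  set (C := fun j => epsilon (inhabits (fun _ : Y => False))
                             (admissible (fst (of_nat j)) (snd (of_nat j)))).
  assert (HC : forall j, admissible (fst (of_nat j)) (snd (of_nat j)) (C j))
    by (intros j; apply epsilon_spec, Hadm).
  exists C; split; [|split].
  { intros j; exact (proj1 (proj1 (HC j))). }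
  { intros j; exact (proj2 (proj1 (HC j))). }
  intros x Ux; destruct (zero_dim Y U HU x Ux) as [V [HVo [HVc [Vx VU]]]].
  destruct (HVo x Vx) as [eps [epos Heps]].
  destruct (archimed_cor1 (eps / 2)) as [[|m] [Hm Hm0]]; [lra | lia|].
  assert (Ipos : 0 < / INR (S m)) by (apply Rinv_0_lt_compat, lt_0_INR; lia).
  destruct (Hs x _ Ipos) as [k [z [sk dxz]]].
  assert (Hgood : good k m V).
  { split; [split; [split; assumption | exact VU]|].
    exists z; split; [exact sk|]; intros y Hy; apply Heps.
    pose proof (Defs.dist_tri Y x z y); lra. }
  exists (to_nat (k, m)); destruct (HC (to_nat (k, m))) as [_ Hgood'].
  rewrite cancel_of_to in Hgood'; simpl in Hgood'.
  destruct (Hgood' (ex_intro _ V Hgood)) as [_ [z' [sk' Hz']]].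
  rewrite sk in sk'; injection sk' as <-.
  apply Hz'; rewrite Defs.dist_sym; exact dxz.
Qed.

Lemma dyadic_union_locally_constant (C : nat -> Y -> Prop) (z : Z) :
  (forall j, clopen (C j)) -> locally_constant (fun y => dyadic_union C y z).
Proof.
  intros HC x; destruct (Z.eq_dec z 0) as [->|nz].
  - exists 1; split; [lra | intros y _; split; intros _; left; reflexivity].
  - destruct (near_forall_in x (fun j y => C j y <-> C j x) (seq 0 (Z.to_nat (Z.abs z))))
      as [e [ep He]]; [intros j _; apply clopen_locally_constant, HC|].
    exists e; split; auto; intros y d; rewrite !(dyadic_union_bounded _ C _ z nz).
    split; intros [j [Hj [Cj D]]]; exists j; repeat split; auto; apply (He y d j Hj); auto.
Qed.

Lemma of_pred_continuous (n : nat) (Q : Y -> list letter -> Prop) :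
  (forall y, is_normal_subgroup (of_pred (n := n) (Q y))) ->
  (forall w, locally_constant (fun y => Q y w)) ->
  continuous_to_Gn (fun y => of_pred (n := n) (Q y)).
Proof.
  intros Hnorm HQ; split; [exact Hnorm|].
  intros U HU x [Ux _]; destruct (HU _ Ux) as [F HF].
  destruct (near_forall_in x (fun c y => Q y (proj1_sig c) <-> Q x (proj1_sig c)) F)
    as [e [ep He]]; [intros c _; apply HQ|].
  exists e; split; auto; intros y d; split; [|apply Hnorm].
  apply HF; intros c Hc; specialize (He y d c Hc).
  unfold of_pred; do 2 destruct excluded_middle_informative; tauto.
Qed.

End Local.

Lemma torsion_free_closed (n : nat) :
  closed_in_Gn (fun N : X n => is_normal_subgroup N /\ quotient_torsion_free N).
Proof.
  split; [intros x [H _]; exact H|].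
  exists (fun x : X n => exists (g h : FG n) k, (1 <= k)%nat /\
            proj1_sig h = wpow (proj1_sig g) k /\ x h = true /\ x g = false).
  split.
  - intros x [g [h [k [Hk [E [Hh Hg]]]]]]; exists [h; g]; intros y Hy.
    exists g, h, k; repeat split; auto;
      [rewrite (Hy h) | rewrite (Hy g)]; simpl; auto.
  - intros x Hx; split.
    + intros Htf; assert (H : ~ quotient_torsion_free x) by tauto.
      apply not_all_ex_not in H as [g H]; apply not_all_ex_not in H as [k H].
      apply imply_to_and in H as [Hk H]; apply imply_to_and in H as [[h [E Hh]] Hg].
      exists g, h, k; repeat split; auto; apply not_true_is_false; exact Hg.
    + intros [g [h [k [Hk [E [Hh Hg]]]]]] [_ T].
      assert (x g = true) by (apply (T g k Hk); exists h; auto); congruence.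
Qed.

Lemma torsion_free_reduction (n : nat) (Y : ZDPolish) (B : Y -> Prop) :
  (0 < n)%nat -> mclosed B ->
  exists f : Y -> X n, continuous_to_Gn f /\
    forall y, (is_normal_subgroup (f y) /\ quotient_torsion_free (f y)) <-> B y.
Proof.
  intros Hn HB; destruct (open_clopen_cover Y _ HB) as [C [HC [CnB Cov]]].
  assert (Hnorm : forall y, is_normal_subgroup (exp_pullback n 0 (dyadic_union C y))).
  { intros y; apply exp_pullback_normal;
      [left; reflexivity | apply dyadic_union_add | apply dyadic_union_opp]. }
  exists (fun y => exp_pullback n 0 (dyadic_union C y)); split.
  - apply of_pred_continuous; [exact Hnorm|].
    intros w; apply dyadic_union_locally_constant; exact HC.
  - intros y; split.
    + intros [_ Htf]; apply NNPP; intros nBy; destruct (Cov y nBy) as [j Cj].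
      apply (exp_pullback_torsion n 0 (dyadic_union C y) (2 ^ S j) Hn);
        [apply Nat.le_succ_l, Nat.neq_0_lt_0, Nat.pow_nonzero; lia | | apply dyadic_union_one | exact Htf].
      right; exists j; split; [exact Cj|]; rewrite Nat2Z.inj_pow; reflexivity.
    + intros By; split; [apply Hnorm|].
      apply exp_pullback_torsion_free; [left; reflexivity|].
      apply dyadic_union_trivial; intros j Cj; exact (CnB j y Cj By).
Qed.

Theorem mainTheorem10 (n : nat) (hn : (1 < n)%nat) :
  Pi01_complete_in_Gn (fun N : X n => is_normal_subgroup N /\ quotient_torsion_free N).
Proof.
  split; [apply torsion_free_closed|].
  intros Y B HB; apply torsion_free_reduction; [lia | exact HB].
Qed.
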